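(* Let $n\ge 6$ and let $H_1$ be the $3$-graph on $[n]$ with edge set $\big(E(B(2,n-2))\setminus\{2ij: i,j\in[n]\setminus\{1,2,3,4,5,6\}\}\big)\cup\{345,346\}$. Then $\lambda(H_1)<\frac{\sqrt3}{18}$.
   Context: $B(2,n-2)$ is the $3$-graph on $[n]$ whose edge set is $\{e\in\binom{[n]}3: e\cap\{1,2\}\neq\emptyset\}$. For a $3$-graph $G$ on $[n]$, $\lambda(G)=\max\{\sum_{e\in E(G)}\prod_{i\in e}x_i:\sum_i x_i=1,x_i\ge0\}$. *)

From HB Require Import structures.
From mathcomp Require Import all_boot all_order all_algebra.
From mathcomp Require Import classical_sets reals.
Set Implicit Arguments. Unset Strict Implicit. Unset Printing Implicit Defensive.
Import Order.TTheory GRing.Theory Num.Theory.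
Local Open Scope ring_scope.
Local Open Scope classical_set_scope.

(* Vertex set [n] = {1,...,n} is represented by 'I_n; the ordinal i stands
   for the vertex with label i+1. *)
Definition lab n (i : 'I_n) : nat := (i : nat).+1.

Definition simplex (R : realType) n : set ('I_n -> R) :=
  [set x | (forall i, 0 <= x i) /\ \sum_(i < n) x i = 1].

Definition lag_poly (R : realType) n (G : {set {set 'I_n}}) (x : 'I_n -> R) : R :=
  \sum_(e in G) \prod_(i in e) x i.

Definition lagrangian (R : realType) n (G : {set {set 'I_n}}) : R :=
  sup [set lag_poly G x | x in @simplex R n].

Definition vset n (s : seq nat) : {set 'I_n} := [set i : 'I_n | lab i \in s].

Definition B2 n : {set {set 'I_n}} :=
  [set e : {set 'I_n} | (#|e| == 3%N) && [exists i in e, (lab i <= 2)%N]].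

Definition removed2 n : {set {set 'I_n}} :=
  [set e : {set 'I_n} | (#|e| == 3%N) && [exists i in e, lab i == 2%N]
     && [forall j in e, (lab j == 2%N) || (6 < lab j)%N]].

Definition H1 n : {set {set 'I_n}} :=
  (B2 n :\: removed2 n) :|: [set vset n [:: 3; 4; 5]%N; vset n [:: 3; 4; 6]%N].

(* Write [a], [b] for the weights of vertices 1 and 2, [Y] for the total weight
   of {3,...,6} and [Z] for the rest, and [u = 1 - a].  Bounding the elementary
   symmetric parts inside {3,...,6} and inside the rest by their balanced values,
   the Lagrangian of H_1 is at most
     a (u^2 - b^2 - Y^2/4) / 2 + b Y (u - b - 5Y/8) + Y^3/27,
   which is concave in [b].  Maximising out [b] leaves a polynomial inequality in
   [a] and [Y] on a triangle, which has a Polya certificate; this gives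
   lambda(H_1) <= 19/200 < sqrt 3 / 18. *)

From mathcomp Require Import all_boot all_order all_algebra.
From mathcomp Require Import classical_sets reals.
From mathcomp Require Import zify ring lra.
Import Order.TTheory GRing.Theory Num.Theory.
Set Implicit Arguments. Unset Strict Implicit. Unset Printing Implicit Defensive.

Section SortedTriples.
Variable n : nat.

Let ord_lt : rel 'I_n := fun u v => (u < v)%N.

Lemma sorted_enum_set (e : {set 'I_n}) : sorted ord_lt (enum e).
Proof.
have sorted_ord : sorted ord_lt (enum 'I_n).
  by have := iota_ltn_sorted 0 n; rewrite -val_enum_ord sorted_map.
rewrite /enum_mem -enumT; apply: sorted_filter => //.
by move=> a b c; apply: ltn_trans.
Qed.

Lemma enum_card3 (e : {set 'I_n}) : #|e| = 3%N ->
  exists i j k, [/\ enum e = [:: i; j; k], (i < j)%N & (j < k)%N].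
Proof.
rewrite cardE => he; have := sorted_enum_set e.
case: (enum e) he => [|i [|j [|k [|l s]]]] //= _ /and3P [ij jk _].
by exists i, j, k.
Qed.

Lemma enum_set3 (i j k : 'I_n) : (i < j)%N -> (j < k)%N ->
  enum [set i; j; k] = [:: i; j; k].
Proof.
move=> ij jk; apply: (irr_sorted_eq (leT := ord_lt)) => //.
- by move=> a b c; apply: ltn_trans.
- by move=> a; apply: ltnn.
- exact: sorted_enum_set.
- by rewrite /= /ord_lt ij jk.
- by move=> x; rewrite mem_enum !inE orbA.
Qed.

End SortedTriples.

Local Open Scope ring_scope.

Lemma sum_card3_sets (R : nmodType) n (G : {set {set 'I_n.+1}}) (F : {set 'I_n.+1} -> R) :
  (forall e, e \in G -> #|e| = 3%N) ->
  \sum_(e in G) F e = \sum_(i : 'I_n.+1) \sum_(j : 'I_n.+1) \sum_(k : 'I_n.+1)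
     (if ((i < j) && (j < k))%N && ([set i; j; k] \in G) then F [set i; j; k] else 0).
Proof.
move=> G3.
pose set3 (t : 'I_n.+1 * 'I_n.+1 * 'I_n.+1) := [set t.1.1; t.1.2; t.2].
pose sorted3 (e : {set 'I_n.+1}) :=
  (nth ord0 (enum e) 0, nth ord0 (enum e) 1, nth ord0 (enum e) 2).
rewrite (reindex_onto set3 sorted3); last first.
  move=> e /G3 /enum_card3 [i [j [k [he _ _]]]].
  apply/setP => x; rewrite /set3 /sorted3 -[x \in e]mem_enum he /=.
  by rewrite !inE orbA.
rewrite [RHS]pair_bigA [RHS]pair_bigA big_mkcond /=.
apply: eq_bigr => [[[i j] k]] _ /=; congr (if _ then _ else _).
case lt_ijk: ((i < j) && (j < k))%N.
  by case/andP: lt_ijk => ij jk; rewrite /sorted3 /= enum_set3 //= eqxx andbT.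
case inG: ([set i; j; k] \in G) => //=; apply/negP => /eqP E.
have [i' [j' [k' [he ij jk]]]] := enum_card3 (G3 _ inG).
by move: E lt_ijk; rewrite /sorted3 /set3 /= he => -[<- <- <-]; rewrite ij jk.
Qed.

Lemma prod_set3 (R : comNzRingType) n (x : 'I_n -> R) (i j k : 'I_n) :
  (i < j)%N -> (j < k)%N -> \prod_(l in [set i; j; k]) x l = x i * x j * x k.
Proof.
move=> ij jk.
have -> : [set i; j; k] = i |: (j |: [set k]) by apply/setP => l; rewrite !inE orbA.
have ij' : i != j by rewrite -val_eqE neq_ltn ij.
have ik' : i != k by rewrite -val_eqE neq_ltn (ltn_trans ij jk).
have jk' : j != k by rewrite -val_eqE neq_ltn jk.
rewrite big_setU1 ?inE ?negb_or ?ij' ?ik' //= big_setU1 ?inE ?jk' //= big_set1.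
by rewrite mulrA.
Qed.

(* Sorted 0-based index triples [i < j < k] that can span an edge of H_1. *)
Definition H1_shape (i j k : nat) : bool :=
  [|| i == 0, (i == 1) && (2 <= j <= 5) | (i == 2) && (j == 3) && ((k == 4) || (k == 5))]%N.

Lemma H1_edge_shape n (i j k : 'I_n) : (i < j)%N -> (j < k)%N ->
  [set i; j; k] \in H1 n -> H1_shape i j k.
Proof.
move=> ij jk; rewrite /H1 /B2 /removed2 !inE.
case/orP => [/andP [notR /andP [card3 /existsP [l /andP [l_in l_small]]]] | Hv].
- move: l_in l_small; rewrite !inE /lab => l_in l_small.
  have i_le1 : (i <= 1)%N by case/orP: l_in => [/orP [] | ] /eqP Hl; subst l; lia.
  case: (nat_of_ord i =P 0)%N => [-> // | i_ne0].
  have i1 : nat_of_ord i = 1%N by lia.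
  have has2 : [exists l in [set i; j; k], lab l == 2%N].
    by apply/existsP; exists i; rewrite !inE eqxx /lab i1.
  move: notR; rewrite card3 has2 /= => /forallPn [l'].
  rewrite negb_imply !inE /lab => /andP [l'_in l'_big].
  rewrite /H1_shape i1 /=.
  by case/orP: l'_in => [/orP [] | ] /eqP Hl; subst l'; rewrite ?i1 in l'_big *; lia.
- have : [/\ i \in [set i; j; k], j \in [set i; j; k] & k \in [set i; j; k]].
    by rewrite !inE !eqxx ?orbT.
  by case/orP: Hv => /eqP ->; rewrite /vset !inE /lab => -[]; rewrite /H1_shape; lia.
Qed.

Lemma card_vset3 n (a b c : nat) : (a < b)%N -> (b < c)%N -> (c < n)%N ->
  #|vset n [:: a.+1; b.+1; c.+1]| = 3%N.
Proof.
move=> ab bc cn.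
have an : (a < n)%N by lia.
have bn : (b < n)%N by lia.
have -> : vset n [:: a.+1; b.+1; c.+1] = [set Ordinal an; Ordinal bn; Ordinal cn].
  by apply/setP => x; rewrite /vset !inE /lab -!val_eqE /= !eqSS orbA.
by rewrite cardE enum_set3.
Qed.

Lemma card_H1_edge n e : (6 <= n)%N -> e \in H1 n -> #|e| = 3%N.
Proof.
rewrite /H1 /B2 !inE => n6.
case/orP => [/andP [_ /andP [/eqP // _]] | /orP [] /eqP ->];
  by apply: card_vset3 => //; lia.
Qed.

Definition pair_sum (R : comNzRingType) (y : nat -> R) lo n :=
  \sum_(lo <= j < n) \sum_(0 <= k < n) (if (j < k)%N then y j * y k else 0).

Lemma sqr_big_nat (R : comNzRingType) (y : nat -> R) lo n : (lo <= n)%N ->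
  (\sum_(lo <= j < n) y j) ^+ 2 = \sum_(lo <= j < n) y j ^+ 2 + 2 * pair_sum y lo n.
Proof.
rewrite /pair_sum; elim: n => [|n IH] lo_n.
  have -> : lo = 0%N by lia.
  by rewrite !big_geq // expr0n mulr0 addr0.
have [n_lt_lo | lo_le_n] := ltnP n lo.
  have -> : lo = n.+1 by lia.
  by rewrite !big_geq // expr0n mulr0 addr0.
have new_row : \sum_(0 <= k < n.+1) (if (n < k)%N then y n * y k else 0) = 0.
  rewrite big_nat_cond big1 // => k /andP [/andP [_ kn] _].
  by rewrite ifF //; apply/negbTE; lia.
have pairs_rec : \sum_(lo <= j < n.+1) \sum_(0 <= k < n.+1)
      (if (j < k)%N then y j * y k else 0) =
    \sum_(lo <= j < n) \sum_(0 <= k < n) (if (j < k)%N then y j * y k else 0)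
    + y n * \sum_(lo <= j < n) y j.
  rewrite big_nat_recr //= new_row addr0 big_distrr -big_split /=.
  apply: eq_big_nat => j /andP [_ jn].
  by rewrite big_nat_recr //= ifT // mulrC.
by rewrite pairs_rec !big_nat_recr //= sqrrD IH //; ring.
Qed.

Lemma big_ord_nat3 (R : nmodType) n (F : nat -> nat -> nat -> R) :
  \sum_(i < n) \sum_(j < n) \sum_(k < n) F i j k =
  \sum_(0 <= i < n) \sum_(0 <= j < n) \sum_(0 <= k < n) F i j k.
Proof.
rewrite big_mkord; apply: eq_bigr => i _; rewrite big_mkord; apply: eq_bigr => j _.
by rewrite big_mkord.
Qed.

Definition H1_term (R : comNzRingType) (y : nat -> R) i j k :=
  if [&& (i < j)%N, (j < k)%N & H1_shape i j k] then y i * y j * y k else 0.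

Section H1Rows.
Variables (R : comNzRingType) (n : nat) (y : nat -> R).
Hypothesis n6 : (6 <= n)%N.

Local Notation y0 := (y 0%N).
Local Notation y1 := (y 1%N).
Local Notation y2 := (y 2%N).
Local Notation y3 := (y 3%N).
Local Notation y4 := (y 4%N).
Local Notation y5 := (y 5%N).
Local Notation Z := (\sum_(6 <= k < n) y k).
Local Notation row i := (\sum_(0 <= j < n) \sum_(0 <= k < n) H1_term y i j k).

Lemma big_nat_first6 (F : nat -> R) : \sum_(0 <= i < n) F i =
  F 0%N + F 1%N + F 2%N + F 3%N + F 4%N + F 5%N + \sum_(6 <= i < n) F i.
Proof.
rewrite (big_cat_nat (n := 6)) //=; congr (_ + _).
by rewrite 6?big_ltn // big_geq // addr0 !addrA.
Qed.

Lemma big_nat_tail0 m (F : nat -> R) :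
  (forall i, (m <= i)%N -> F i = 0) -> \sum_(m <= i < n) F i = 0.
Proof. by move=> F0; rewrite big_nat_cond big1 // => i /andP [/andP [/F0 ->]]. Qed.

Lemma big_nat_tail_gt c a : (c < 6)%N ->
  \sum_(6 <= k < n) (if (c < k)%N then a * y k else 0) = a * Z.
Proof.
by move=> c6; rewrite big_distrr; apply: eq_big_nat => k /andP [k6 _]; rewrite ifT //; lia.
Qed.

Lemma H1_row_ge3 i : (3 <= i)%N -> row i = 0.
Proof.
move=> i3; rewrite big1 // => j _; rewrite big1 // => k _.
by rewrite /H1_term ifF //; apply/negbTE; rewrite /H1_shape; lia.
Qed.

Lemma H1_row2 : row 2 = y2 * y3 * (y4 + y5).
Proof.
have shape2 j k : H1_term y 2 j k =
    if ((j == 3) && ((k == 4) || (k == 5)))%N then y2 * y j * y k else 0.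
  by rewrite /H1_term /H1_shape /=; congr (if _ then _ else _); apply/idP/idP; lia.
under eq_bigr do under eq_bigr do rewrite shape2.
rewrite big_nat_first6 (big_nat_tail0 (m := 6)); last first.
  by move=> j j6; rewrite big1 // => k _; rewrite ifF //; apply/negbTE; lia.
rewrite /= !big1_eq big_nat_first6 (big_nat_tail0 (m := 6)); last first.
  by move=> k k6; rewrite ifF //; apply/negbTE; lia.
by rewrite /=; ring.
Qed.

Lemma H1_row1 : row 1 = y1 * (y2 * y3 + y2 * y4 + y2 * y5 + y3 * y4 + y3 * y5 + y4 * y5
                             + (y2 + y3 + y4 + y5) * Z).
Proof.
have shape1 j k : H1_term y 1 j k =
    if ((2 <= j <= 5) && (j < k))%N then y1 * y j * y k else 0.
  by rewrite /H1_term /H1_shape /=; congr (if _ then _ else _); apply/idP/idP; lia.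
under eq_bigr do under eq_bigr do rewrite shape1.
rewrite big_nat_first6 (big_nat_tail0 (m := 6)); last first.
  by move=> j j6; rewrite big1 // => k _; rewrite ifF //; apply/negbTE; lia.
by rewrite /= !big1_eq !big_nat_first6 /= !big_nat_tail_gt //; ring.
Qed.

Lemma H1_row0 : row 0 =
  y0 * (y1 * y2 + y1 * y3 + y1 * y4 + y1 * y5 + y2 * y3 + y2 * y4 + y2 * y5
        + y3 * y4 + y3 * y5 + y4 * y5 + (y1 + y2 + y3 + y4 + y5) * Z + pair_sum y 6 n).
Proof.
have shape0 j k : H1_term y 0 j k =
    if ((0 < j) && (j < k))%N then y0 * y j * y k else 0.
  by rewrite /H1_term /H1_shape /=; congr (if _ then _ else _); apply/idP/idP; lia.
under eq_bigr do under eq_bigr do rewrite shape0.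
rewrite big_nat_first6.
have -> : \sum_(6 <= j < n) \sum_(0 <= k < n)
    (if ((0 < j) && (j < k))%N then y0 * y j * y k else 0) = y0 * pair_sum y 6 n.
  rewrite /pair_sum big_distrr; apply: eq_big_nat => j /andP [j6 _].
  have j_pos : (0 < j)%N by lia.
  rewrite big_distrr; apply: eq_bigr => k _; rewrite j_pos /=.
  by case: ifP; rewrite ?mulr0 ?mulrA.
by rewrite /= big1_eq !big_nat_first6 /= !big_nat_tail_gt //; ring.
Qed.

Lemma H1_term_sum :
  \sum_(0 <= i < n) row i =
  y0 * (y1 * y2 + y1 * y3 + y1 * y4 + y1 * y5 + y2 * y3 + y2 * y4 + y2 * y5
        + y3 * y4 + y3 * y5 + y4 * y5 + (y1 + y2 + y3 + y4 + y5) * Z + pair_sum y 6 n)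
  + y1 * (y2 * y3 + y2 * y4 + y2 * y5 + y3 * y4 + y3 * y5 + y4 * y5
          + (y2 + y3 + y4 + y5) * Z)
  + y2 * y3 * (y4 + y5).
Proof.
rewrite big_nat_first6 (big_nat_tail0 (m := 6)) => [|i i6]; last first.
  by apply: H1_row_ge3; lia.
rewrite (H1_row_ge3 (i := 3)) // (H1_row_ge3 (i := 4)) // (H1_row_ge3 (i := 5)) //.
by rewrite H1_row0 H1_row1 H1_row2; ring.
Qed.

End H1Rows.

Section RealBounds.
Variable R : realFieldType.

Definition H1_slack (a Y : R) :=
  (2 * a + 4 * Y) * (19/200 - a * (1 - a) ^+ 2 / 2 + a * Y ^+ 2 / 8 - Y ^+ 3 / 27)
  - Y ^+ 2 * (1 - a - 5/8 * Y) ^+ 2.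

Local Ltac nonneg_poly := match goal with
 | |- is_true (0 <= _ + _) => refine (addr_ge0 _ _); nonneg_poly
 | |- is_true (0 <= _ * _) => refine (mulr_ge0 _ _); nonneg_poly
 | |- is_true (0 <= _ ^+ _) => refine (exprn_ge0 _ _); nonneg_poly
 | |- _ => first [assumption | exact: ler0n | exact: ler01]
 end.

(* Polya: after homogenising with [w = 1 - a - Y] and multiplying by
   [(a + Y + w) ^+ 9], all coefficients are nonnegative.  Large constants are
   spelled in base 1000 because decimal numerals elaborate to unary naturals. *)
Lemma H1_slack_ge0 (a Y : R) : 0 <= a -> 0 <= Y -> a + Y <= 1 -> 0 <= H1_slack a Y.
Proof.
move=> a_ge0 Y_ge0 aY_le1.
pose w := 1 - a - Y.
have w_ge0 : 0 <= w by rewrite /w; lra.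
have certificate : (43*1000+200) * H1_slack a Y =
    (16*1000+416) * (Y^+1 * w^+12) + (153*1000+792) * (Y^+2 * w^+11)
    + (662*1000+256) * (Y^+3 * w^+10) + ((1*1000+752)*1000+245) * (Y^+4 * w^+9)
    + ((3*1000+218)*1000+445) * (Y^+5 * w^+8) + ((4*1000+387)*1000+572) * (Y^+6 * w^+7)
    + ((4*1000+594)*1000+884) * (Y^+7 * w^+6) + ((3*1000+718)*1000+422) * (Y^+8 * w^+5)
    + ((2*1000+277)*1000+270) * (Y^+9 * w^+4) + ((1*1000+8)*1000+420) * (Y^+10 * w^+3)
    + (299*1000+556) * (Y^+11 * w^+2) + (52*1000+317) * (Y^+12 * w^+1) + (3*1000+941) * (Y^+13)
    + (8*1000+208) * (a^+1 * w^+12) + (209*1000+88) * (a^+1 * Y^+1 * w^+11)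
    + ((1*1000+369)*1000+440) * (a^+1 * Y^+2 * w^+10)
    + ((4*1000+504)*1000+720) * (a^+1 * Y^+3 * w^+9)
    + ((9*1000+144)*1000+765) * (a^+1 * Y^+4 * w^+8)
    + ((12*1000+822)*1000+696) * (a^+1 * Y^+5 * w^+7)
    + ((13*1000+533)*1000+996) * (a^+1 * Y^+6 * w^+6)
    + ((11*1000+440)*1000+440) * (a^+1 * Y^+7 * w^+5)
    + ((7*1000+801)*1000+470) * (a^+1 * Y^+8 * w^+4) + ((4*1000+36)*1000+440) * (a^+1 * Y^+9 * w^+3)
    + ((1*1000+421)*1000+388) * (a^+1 * Y^+10 * w^+2) + (290*1000+808) * (a^+1 * Y^+11 * w^+1)
    + (24*1000+925) * (a^+1 * Y^+12) + (55*1000+296) * (a^+2 * w^+11)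
    + (914*1000+112) * (a^+2 * Y^+1 * w^+10) + ((4*1000+555)*1000+440) * (a^+2 * Y^+2 * w^+9)
    + ((11*1000+97)*1000+360) * (a^+2 * Y^+3 * w^+8)
    + ((15*1000+390)*1000+900) * (a^+2 * Y^+4 * w^+7)
    + ((13*1000+250)*1000+412) * (a^+2 * Y^+5 * w^+6)
    + ((8*1000+569)*1000+764) * (a^+2 * Y^+6 * w^+5)
    + ((6*1000+228)*1000+540) * (a^+2 * Y^+7 * w^+4) + ((4*1000+908)*1000+60) * (a^+2 * Y^+8 * w^+3)
    + ((2*1000+679)*1000+300) * (a^+2 * Y^+9 * w^+2) + (778*1000+716) * (a^+2 * Y^+10 * w^+1)
    + (88*1000+452) * (a^+2 * Y^+11) + (152*1000+928) * (a^+3 * w^+10)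
    + ((2*1000+30)*1000+400) * (a^+3 * Y^+1 * w^+9) + ((7*1000+860)*1000+240) * (a^+3 * Y^+2 * w^+8)
    + ((13*1000+337)*1000+280) * (a^+3 * Y^+3 * w^+7)
    + ((9*1000+757)*1000+860) * (a^+3 * Y^+4 * w^+6)
    + ((1*1000+345)*1000+176) * (a^+3 * Y^+5 * w^+5) + (661*1000+500) * (a^+3 * Y^+6 * w^+4)
    + ((5*1000+517)*1000+840) * (a^+3 * Y^+7 * w^+3)
    + ((5*1000+877)*1000+180) * (a^+3 * Y^+8 * w^+2)
    + ((2*1000+444)*1000+760) * (a^+3 * Y^+9 * w^+1) + (365*1000+748) * (a^+3 * Y^+10)
    + (250*1000+560) * (a^+4 * w^+9) + ((3*1000+123)*1000+360) * (a^+4 * Y^+1 * w^+8)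
    + ((10*1000+912)*1000+320) * (a^+4 * Y^+2 * w^+7)
    + ((18*1000+328)*1000+800) * (a^+4 * Y^+3 * w^+6)
    + ((21*1000+219)*1000+30) * (a^+4 * Y^+4 * w^+5)
    + ((26*1000+29)*1000+710) * (a^+4 * Y^+5 * w^+4)
    + ((30*1000+434)*1000+460) * (a^+4 * Y^+6 * w^+3)
    + ((23*1000+108)*1000+220) * (a^+4 * Y^+7 * w^+2)
    + ((9*1000+255)*1000+150) * (a^+4 * Y^+8 * w^+1) + ((1*1000+481)*1000+430) * (a^+4 * Y^+9)
    + (434*1000+160) * (a^+5 * w^+8) + ((5*1000+588)*1000+352) * (a^+5 * Y^+1 * w^+7)
    + ((22*1000+425)*1000+984) * (a^+5 * Y^+2 * w^+6)
    + ((50*1000+635)*1000+872) * (a^+5 * Y^+3 * w^+5)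
    + ((79*1000+58)*1000+70) * (a^+5 * Y^+4 * w^+4)
    + ((87*1000+113)*1000+880) * (a^+5 * Y^+5 * w^+3)
    + ((62*1000+161)*1000+92) * (a^+5 * Y^+6 * w^+2)
    + ((24*1000+944)*1000+184) * (a^+5 * Y^+7 * w^+1) + ((4*1000+202)*1000+982) * (a^+5 * Y^+8)
    + ((1*1000+57)*1000+536) * (a^+6 * w^+7) + ((11*1000+684)*1000+736) * (a^+6 * Y^+1 * w^+6)
    + ((45*1000+632)*1000+160) * (a^+6 * Y^+2 * w^+5)
    + ((96*1000+757)*1000+920) * (a^+6 * Y^+3 * w^+4)
    + ((125*1000+435)*1000+940) * (a^+6 * Y^+4 * w^+3)
    + ((99*1000+19)*1000+116) * (a^+6 * Y^+5 * w^+2)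
    + ((43*1000+306)*1000+956) * (a^+6 * Y^+6 * w^+1) + ((7*1000+970)*1000+820) * (a^+6 * Y^+7)
    + ((2*1000+140)*1000+992) * (a^+7 * w^+6) + ((18*1000+589)*1000+824) * (a^+7 * Y^+1 * w^+5)
    + ((60*1000+639)*1000+840) * (a^+7 * Y^+2 * w^+4)
    + ((102*1000+970)*1000+560) * (a^+7 * Y^+3 * w^+3)
    + ((98*1000+18)*1000+100) * (a^+7 * Y^+4 * w^+2)
    + ((49*1000+580)*1000+712) * (a^+7 * Y^+5 * w^+1) + ((10*1000+342)*1000+164) * (a^+7 * Y^+6)
    + ((2*1000+871)*1000+936) * (a^+8 * w^+5) + ((19*1000+375)*1000+200) * (a^+8 * Y^+1 * w^+4)
    + ((49*1000+299)*1000+840) * (a^+8 * Y^+2 * w^+3)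
    + ((61*1000+516)*1000+80) * (a^+8 * Y^+3 * w^+2)
    + ((38*1000+64)*1000+285) * (a^+8 * Y^+4 * w^+1) + ((9*1000+344)*1000+781) * (a^+8 * Y^+5)
    + ((2*1000+507)*1000+760) * (a^+9 * w^+4) + ((12*1000+864)*1000+960) * (a^+9 * Y^+1 * w^+3)
    + ((23*1000+893)*1000+920) * (a^+9 * Y^+2 * w^+2)
    + ((19*1000+443)*1000+600) * (a^+9 * Y^+3 * w^+1) + ((5*1000+883)*1000+605) * (a^+9 * Y^+4)
    + ((1*1000+416)*1000+960) * (a^+10 * w^+3) + ((5*1000+247)*1000+936) * (a^+10 * Y^+1 * w^+2)
    + ((6*1000+342)*1000+192) * (a^+10 * Y^+2 * w^+1) + ((2*1000+529)*1000+616) * (a^+10 * Y^+3)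
    + (498*1000+528) * (a^+11 * w^+2) + ((1*1000+194)*1000+48) * (a^+11 * Y^+1 * w^+1)
    + (706*1000+320) * (a^+11 * Y^+2) + (98*1000+496) * (a^+12 * w^+1)
    + (114*1000+912) * (a^+12 * Y^+1) + (8*1000+208) * (a^+13).
  by rewrite /H1_slack /w; field.
have : 0 <= (43*1000+200) * H1_slack a Y by clearbody w; rewrite certificate; nonneg_poly.
by rewrite pmulr_rge0 //; lra.
Qed.

Definition reduced_lag (a b Y : R) :=
  a * ((1 - a) ^+ 2 - b ^+ 2 - Y ^+ 2 / 4) / 2 + b * Y * (1 - a - b - 5/8 * Y) + Y ^+ 3 / 27.

Lemma reduced_lag_le (a b Y : R) : 0 <= a -> 0 <= b -> 0 <= Y -> a + b + Y <= 1 ->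
  reduced_lag a b Y <= 19/200.
Proof.
move=> a_ge0 b_ge0 Y_ge0 abY_le1.
(* [reduced_lag] is a concave quadratic in [b] with leading coefficient [-(a/2 + Y)]. *)
have complete_square : (2 * a + 4 * Y) * (19/200 - reduced_lag a b Y) =
    H1_slack a Y + (2 * (a / 2 + Y) * b - Y * (1 - a - 5/8 * Y)) ^+ 2.
  by rewrite /reduced_lag /H1_slack; field.
have [weight_gt0 | weight_le0] := ltrP 0 (2 * a + 4 * Y).
  rewrite -subr_ge0 -(pmulr_rge0 _ weight_gt0) complete_square.
  by rewrite addr_ge0 ?sqr_ge0 // H1_slack_ge0 //; lra.
have -> : a = 0 by lra.
have -> : Y = 0 by lra.
by rewrite /reduced_lag; lra.
Qed.

Lemma amgm3 (u v w : R) : 0 <= u -> 0 <= v -> 0 <= w ->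
  27 * (u * v * w) <= (u + v + w) ^+ 3.
Proof.
move=> u_ge0 v_ge0 w_ge0; rewrite -subr_ge0.
have -> : (u + v + w) ^+ 3 - 27 * (u * v * w) =
    (u + v + w) / 2 * ((u - v) ^+ 2 + (v - w) ^+ 2 + (w - u) ^+ 2)
    + 3 * (u * (v - w) ^+ 2 + v * (u - w) ^+ 2 + w * (u - v) ^+ 2) by field.
apply: addr_ge0; apply: mulr_ge0.
- by rewrite divr_ge0 // !addr_ge0.
- by rewrite !addr_ge0 ?sqr_ge0.
- by [].
- by rewrite !addr_ge0 // mulr_ge0 // sqr_ge0.
Qed.

Lemma H1_poly_le (y0 y1 y2 y3 y4 y5 Z W : R) :
  0 <= y0 -> 0 <= y1 -> 0 <= y2 -> 0 <= y3 -> 0 <= y4 -> 0 <= y5 -> 0 <= Z ->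
  2 * W <= Z ^+ 2 -> y0 + y1 + y2 + y3 + y4 + y5 + Z = 1 ->
  y0 * (y1 * y2 + y1 * y3 + y1 * y4 + y1 * y5 + y2 * y3 + y2 * y4 + y2 * y5
        + y3 * y4 + y3 * y5 + y4 * y5 + (y1 + y2 + y3 + y4 + y5) * Z + W)
  + y1 * (y2 * y3 + y2 * y4 + y2 * y5 + y3 * y4 + y3 * y5 + y4 * y5
          + (y2 + y3 + y4 + y5) * Z)
  + y2 * y3 * (y4 + y5) <= 19/200.
Proof.
move=> h0 h1 h2 h3 h4 h5 hZ hW sum1.
set Y := y2 + y3 + y4 + y5.
set e := y2 * y3 + y2 * y4 + y2 * y5 + y3 * y4 + y3 * y5 + y4 * y5.
have Y_ge0 : 0 <= Y by rewrite /Y; lra.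
have e_le : e <= 3/8 * Y ^+ 2.
  rewrite -subr_ge0.
  have -> : 3/8 * Y ^+ 2 - e = ((y2 - y3) ^+ 2 + (y2 - y4) ^+ 2 + (y2 - y5) ^+ 2
      + (y3 - y4) ^+ 2 + (y3 - y5) ^+ 2 + (y4 - y5) ^+ 2) / 8 by rewrite /Y /e; field.
  by rewrite divr_ge0 ?addr_ge0 ?sqr_ge0.
have cubic_le : y2 * y3 * (y4 + y5) <= Y ^+ 3 / 27.
  by have := amgm3 h2 h3 (addr_ge0 h4 h5); rewrite /Y !addrA; lra.
have Z_def : Z = 1 - y0 - y1 - Y by rewrite /Y; lra.
apply: le_trans (reduced_lag_le h0 h1 Y_ge0 _); last by rewrite /Y; lra.
rewrite -subr_ge0; set slack := (X in 0 <= X).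
have -> : slack = y0 * (3/8 * Y ^+ 2 - e) + y1 * (3/8 * Y ^+ 2 - e)
    + y0 * (Z ^+ 2 / 2 - W) + (Y ^+ 3 / 27 - y2 * y3 * (y4 + y5)).
  by rewrite /slack /reduced_lag /e Z_def /Y; field.
have e_slack : 0 <= 3/8 * Y ^+ 2 - e by rewrite subr_ge0.
have W_slack : 0 <= Z ^+ 2 / 2 - W by rewrite subr_ge0; lra.
have cubic_slack : 0 <= Y ^+ 3 / 27 - y2 * y3 * (y4 + y5) by rewrite subr_ge0.
by rewrite addr_ge0 // !addr_ge0 // mulr_ge0.
Qed.

End RealBounds.

Lemma lag_poly_H1_le (R : realType) m (x : 'I_m.+1 -> R) : (6 <= m.+1)%N ->
  (forall i, 0 <= x i) -> \sum_(i < m.+1) x i = 1 -> lag_poly (H1 m.+1) x <= 19/200.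
Proof.
move=> n6 x_ge0 x_sum1.
pose y l := x (inord l).
have y_ge0 l : 0 <= y l by apply: x_ge0.
rewrite /lag_poly sum_card3_sets => [|e]; last exact: card_H1_edge.
apply: le_trans (_ : _ <= \sum_(i < m.+1) \sum_(j < m.+1) \sum_(k < m.+1) H1_term y i j k) _.
  apply: ler_sum => i _; apply: ler_sum => j _; apply: ler_sum => k _.
  rewrite /H1_term; case: ifP => [/andP [/andP [ij jk] inH1] | _].
    by rewrite ij jk H1_edge_shape // prod_set3 // /y !inord_val.
  by case: ifP; rewrite ?mulr_ge0.
rewrite big_ord_nat3 H1_term_sum //.
have y_sum1 : \sum_(0 <= i < m.+1) y i = 1.
  by rewrite big_mkord -x_sum1; apply: eq_bigr => i _; rewrite /y inord_val.
rewrite big_nat_first6 // in y_sum1.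
apply: H1_poly_le => //; first exact: sumr_ge0.
rewrite sqr_big_nat // -[X in X <= _]add0r lerD2r.
by apply: sumr_ge0 => i _; apply: sqr_ge0.
Qed.

Theorem lemma4p10 (R : realType) (n : nat) (hn : (6 <= n)%N) :
  lagrangian R (H1 n) < Num.sqrt 3 / 18.
Proof.
have bound_lt : (19/200 : R) < Num.sqrt 3 / 18.
  have : (171/100 : R) < Num.sqrt 3.
    have -> : (171/100 : R) = Num.sqrt ((171/100) ^+ 2).
      by rewrite sqrtr_sqr ger0_norm //; lra.
    by rewrite ltr_sqrt; lra.
  lra.
apply: le_lt_trans bound_lt.
case: n hn => [// | m] hn.
apply: ge_sup => [|_ [x [x_ge0 x_sum1] <-]]; last exact: lag_poly_H1_le.
exists (lag_poly (H1 m.+1) (fun=> m.+1%:R^-1)), (fun=> m.+1%:R^-1) => //.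
split => [i|]; first by rewrite invr_ge0.
by rewrite sumr_const card_ord -[_ *+ _]mulr_natr mulVf // pnatr_eq0.
Qed.
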